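(* Let $\delta=x^{\mathbf d}f(\theta)$ be a homogeneous differential operator of degree $\mathbf d$ with $\mathbf d\neq\mathbf 0$, $-\mathbf d\in S$, $\mathbf d=q\mathbf e$ ($q\in\mathbb Z_{\ge1}$, $\mathbf e$ primitive). Then $\delta$ fixes some nonzero monomial ideal of $R$ if and only if there exists a subset $\mathcal B\subseteq\mathbb N^n$ compatible with $\mathbf d$ such that (1) $\operatorname{val}(\mathbf a)>-\infty$ for all $\mathbf a\in W_{\mathcal B}$; (2) for all $\mathbf a\in V'_{\mathrm{mon}}(f)\cap W_{\mathcal B}$ and $i=0,\dots,q-1$, $\mathbf a-i\mathbf e\in V_{\mathrm{mon}}(f)$; (3) for all $\mathbf a,\mathbf b\in V'_{\mathrm{mon}}(f)\cap W_{\mathcal B}$, $\mathbf a-\mathbf b\notin S-\mathbf e$. In this case $\delta$ fixes the ideal $I=(x^{\mathbf a}\mid\mathbf a\in V'_{\mathrm{mon}}(f)\cap W_{\mathcal B})$, and $\operatorname{Exp} I=\{\mathbf a\in W_{\mathcal B}:\operatorname{pval}(\mathbf a)\ge 0\}$.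
   Context: Standing notation. Fix $d\ge 1$. Let $\sigma\subseteq\mathbb R^d$ be a full-dimensional, strongly convex rational polyhedral cone, so $\sigma^\vee$ is full-dimensional and strongly convex. $S=\sigma^\vee\cap\mathbb Z^d$, $R=\mathbb C[S]$ with monomial basis $x^{\mathbf a}$, $\mathbf a\in S$. $h_1,\dots,h_n$ are the primitive support functions of the facets of $\sigma^\vee$, so $S=\{\mathbf a\in\mathbb Z^d:h_i(\mathbf a)\ge0\ \forall i\}$. $(g,m)!=\prod_{j=0}^m(g-j)$ for $m\ge0$, $=1$ for $m<0$; $H_{\mathbf d}=\prod_i(h_i,h_i(-\mathbf d)-1)!$. For $f$ divisible by $H_{\mathbf d}$, $\delta=x^{\mathbf d}f(\theta)$ acts by $\delta(x^{\mathbf a})=f(\mathbf a)x^{\mathbf a+\mathbf d}$. $\operatorname{Exp} I=\{\mathbf a\in S:x^{\mathbf a}\in I\}$; $I$ is $\delta$-fixed if $\delta(I)=I$. $V_{\mathrm{mon}}(f)=\{\mathbf a\in\mathbb Z^d:f(\mathbf a)=0\}$; $S-\mathbf e=\{\mathbf s-\mathbf e:\mathbf s\in S\}$. For $\mathbf a\in\mathbb Z^d$, $\operatorname{val}(\mathbf a)=\inf\{t\in\mathbb R:\mathbf a+t\mathbf d\in V_{\mathrm{mon}}(f)\}\in\mathbb R\cup\{\pm\infty\}$ ($\inf\emptyset=+\infty$). When $\operatorname{val}(\mathbf a)$ is finite, $\operatorname{pval}(\mathbf a)=\max\{t\in[\operatorname{val}(\mathbf a),\operatorname{val}(\mathbf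 a)+1):\mathbf a+t\mathbf d\in V_{\mathrm{mon}}(f)\}$ and $\operatorname{vpt}(\mathbf a)=\mathbf a+\operatorname{pval}(\mathbf a)\mathbf d$. $V'_{\mathrm{mon}}(f)=\{\operatorname{vpt}(\mathbf a):\mathbf a\in\mathbb Z^d,\ \operatorname{val}(\mathbf a)\text{ finite}\}$. A tuple $\beta\in\mathbb N^n$ is compatible with $\mathbf d$ if for every $i$, $\beta_i=0$ or $h_i(\mathbf d)=0$; $\mathcal B\subseteq\mathbb N^n$ is compatible with $\mathbf d$ if each element is. $W_\beta=\{\mathbf a\in S: h_i(\mathbf a)\ge\beta_i\ \forall i\}$, $W_{\mathcal B}=\bigcup_{\beta\in\mathcal B}W_\beta$. *)

From HB Require Import structures.
From mathcomp Require Import all_boot all_order all_algebra.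
From mathcomp Require Import Rstruct complex.
From mathcomp Require Import mpoly.

Set Implicit Arguments.
Unset Strict Implicit.
Unset Printing Implicit Defensive.

Import Order.TTheory GRing.Theory Num.Theory.
Local Open Scope ring_scope.

Definition CC : numClosedFieldType := complex.complex Rdefinitions.R.

Notation zvec dim := 'rV[int]_dim.

Definition lin (dim : nat) (h a : zvec dim) : int :=
  \sum_(j < dim) h ord0 j * a ord0 j.

Definition primitive (dim : nat) (v : zvec dim) : Prop :=
  v != 0 /\ forall (k : int) (w : zvec dim), v = k *: w -> `|k| = 1.

(* Standing hypotheses: h_1..h_n are the primitive support functions of the
   facets of the full-dimensional strongly convex rational polyhedral cone
   sigma^vee = { x | h_i(x) >= 0 for all i }. *)
Definition facet_data (dim n : nat) (h : 'I_n -> zvec dim) : Prop :=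
  [/\ (0 < dim)%N,
      (forall i, primitive (h i)),
      (* sigma^vee is full-dimensional *)
      (exists a : zvec dim, forall i, 0 < lin (h i) a),
      (* sigma^vee is strongly convex (contains no line) *)
      (forall a : zvec dim, (forall i, lin (h i) a = 0) -> a = 0) &
      (* every h_i cuts out a facet (the h_i are exactly the facet normals) *)
      (forall i, exists a : zvec dim,
          lin (h i) a = 0 /\ forall j, j != i -> 0 < lin (h j) a)].

Definition inS (dim n : nat) (h : 'I_n -> zvec dim) (a : zvec dim) : Prop :=
  forall i, 0 <= lin (h i) a.

Definition linpoly (dim : nat) (h : zvec dim) : {mpoly CC[dim]} :=
  \sum_(j < dim) ((h ord0 j)%:~R : CC) *: 'X_j.

Definition ffact (dim : nat) (g : {mpoly CC[dim]}) (m : int) : {mpoly CC[dim]} :=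
  match m with
  | Posz k => \prod_(j < k.+1) (g - (j%:R : CC)%:MP)
  | Negz _ => 1
  end.

Definition Hpoly (dim n : nat) (h : 'I_n -> zvec dim) (dv : zvec dim)
  : {mpoly CC[dim]} :=
  \prod_(i < n) ffact (linpoly (h i)) (lin (h i) (- dv) - 1).

Definition evalZ (dim : nat) (f : {mpoly CC[dim]}) (a : zvec dim) : CC :=
  f.@[fun j => (a ord0 j)%:~R].

Definition Vmon (dim : nat) (f : {mpoly CC[dim]}) (a : zvec dim) : Prop :=
  evalZ f a = 0.

(* An element of R = C[S] is given by its coefficient function
   (a |-> coefficient of x^a), which has finite support contained in S. *)
Definition inR (dim n : nat) (h : 'I_n -> zvec dim) (r : zvec dim -> CC) : Prop :=
  (exists s : seq (zvec dim), forall a, r a != 0 -> a \in s) /\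
  (forall a, r a != 0 -> inS h a).

Definition monomial (dim : nat) (a : zvec dim) : zvec dim -> CC :=
  fun b => if b == a then 1 else 0.

(* delta = x^d f(theta), the C-linear map with delta(x^a) = f(a) x^(a+d):
   the coefficient of x^b in delta(r) is f(b - d) * (coefficient of x^(b-d) in r). *)
Definition delta (dim : nat) (f : {mpoly CC[dim]}) (dv : zvec dim)
  (r : zvec dim -> CC) : zvec dim -> CC :=
  fun b => evalZ f (b - dv) * r (b - dv).

(* E is a monoid ideal of S (E + S \subseteq E, E \subseteq S); these are exactly
   the exponent sets Exp I of the monomial ideals I of R. *)
Definition Sideal (dim n : nat) (h : 'I_n -> zvec dim) (E : zvec dim -> Prop) : Prop :=
  (forall a, E a -> inS h a) /\ (forall a s, E a -> inS h s -> E (a + s)).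

(* The monomial ideal of R spanned by the monomials x^a, a in E (E an S-ideal):
   the elements of R all of whose monomials have exponent in E. *)
Definition mideal (dim n : nat) (h : 'I_n -> zvec dim) (E : zvec dim -> Prop)
  (r : zvec dim -> CC) : Prop :=
  inR h r /\ forall a, r a != 0 -> E a.

(* Exponent set of the ideal generated by the monomials x^a, a in G:
   G + S. *)
Definition genE (dim n : nat) (h : 'I_n -> zvec dim) (G : zvec dim -> Prop)
  (b : zvec dim) : Prop :=
  exists a, G a /\ inS h (b - a).

Definition Exp (dim n : nat) (h : 'I_n -> zvec dim) (I : (zvec dim -> CC) -> Prop)
  (a : zvec dim) : Prop :=
  inS h a /\ I (monomial a).

Definition fixes (dim : nat) (f : {mpoly CC[dim]}) (dv : zvec dim)
  (I : (zvec dim -> CC) -> Prop) : Prop :=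
  (forall r, I r -> I (delta f dv r)) /\
  (forall r, I r -> exists r', I r' /\ forall b, delta f dv r' b = r b).

Definition onV (dim : nat) (f : {mpoly CC[dim]}) (dv a : zvec dim) (t : rat) : Prop :=
  exists b : zvec dim,
    (forall j, ((b ord0 j)%:~R : rat) = (a ord0 j)%:~R + t * (dv ord0 j)%:~R)
    /\ Vmon f b.

(* val(a) > -oo  (the set { t | a + t d in V_mon(f) } is bounded below;
   this includes val(a) = +oo, i.e. the empty set). *)
Definition val_gt_ninf (dim : nat) (f : {mpoly CC[dim]}) (dv a : zvec dim) : Prop :=
  exists m : rat, forall t, onV f dv a t -> m <= t.

Definition is_val (dim : nat) (f : {mpoly CC[dim]}) (dv a : zvec dim) (v : rat) : Prop :=
  (forall t, onV f dv a t -> v <= t) /\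
  (forall w, (forall t, onV f dv a t -> w <= t) -> w <= v).

Definition is_pval (dim : nat) (f : {mpoly CC[dim]}) (dv a : zvec dim) (p : rat) : Prop :=
  exists v, [/\ is_val f dv a v, onV f dv a p, v <= p, p < v + 1 &
              forall t, onV f dv a t -> v <= t -> t < v + 1 -> t <= p].

Definition Vmon' (dim : nat) (f : {mpoly CC[dim]}) (dv b : zvec dim) : Prop :=
  exists (a : zvec dim) (p : rat), is_pval f dv a p /\
    forall j, ((b ord0 j)%:~R : rat) = (a ord0 j)%:~R + p * (dv ord0 j)%:~R.

Definition compatible (dim n : nat) (h : 'I_n -> zvec dim) (dv : zvec dim)
  (beta : 'I_n -> nat) : Prop :=
  forall i, beta i = 0%N \/ lin (h i) dv = 0.

Definition W (dim n : nat) (h : 'I_n -> zvec dim) (beta : 'I_n -> nat)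
  (a : zvec dim) : Prop :=
  inS h a /\ forall i, (beta i)%:Z <= lin (h i) a.

Definition WB (dim n : nat) (h : 'I_n -> zvec dim) (B : ('I_n -> nat) -> Prop)
  (a : zvec dim) : Prop :=
  exists beta, B beta /\ W h beta a.

Definition good_family (dim n : nat) (h : 'I_n -> zvec dim) (f : {mpoly CC[dim]})
  (dv ev : zvec dim) (q : nat) (B : ('I_n -> nat) -> Prop) : Prop :=
  [/\
      (exists beta, B beta),
      (forall beta, B beta -> compatible h dv beta),
      (forall a, WB h B a -> val_gt_ninf f dv a),
      (forall a, Vmon' f dv a -> WB h B a ->
         forall i : nat, (i < q)%N -> Vmon f (a - (i%:Z) *: ev)) &
      (forall a b, Vmon' f dv a -> WB h B a -> Vmon' f dv b -> WB h B b ->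
         ~ (exists s, inS h s /\ a - b = s - ev))].

(* Along each line a + Z e only the integer roots k of f(a + k e) matter, and
   a + t d is a lattice point exactly for t = k / q.  An S-ideal E is stable under
   -e (as -e lies in S), so it meets every line in a half-line {k <= K}; delta fixes
   the monomial ideal of E iff E is stable under +d off V(f) and f(b - d) never
   vanishes on E, and these two conditions say precisely that the roots on the line
   are (K - q, K], i.e. K = pval and the q points below vpt are roots.  Conversely,
   divisibility by H_d makes f vanish where a line leaves S, so every line in S has
   a root, and E = {a in W_B : pval(a) >= 0} is the required ideal; condition (3)
   ensures that every exponent of a multiple of a generator vpt(a) has pval >= 0. *)

From HB Require Import structures.
From mathcomp Require Import all_boot all_order all_algebra.
From mathcomp Require Import Rstruct complex.
From mathcomp Require Import mpoly.
From Stdlib Require Import Classical Wf_nat Lia.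
From mathcomp Require Import zify ring.
Import Order.TTheory GRing.Theory Num.Theory.
Set Implicit Arguments.
Unset Strict Implicit.
Unset Printing Implicit Defensive.
Local Open Scope ring_scope.

Ltac vec_ring := apply/rowP => ?; rewrite !mxE; ring.

Section Linear.
Variables (dim : nat) (u : zvec dim).

Lemma linD a b : lin u (a + b) = lin u a + lin u b.
Proof. by rewrite /lin -big_split; apply: eq_bigr => j _; rewrite mxE mulrDr. Qed.

Lemma linZ k a : lin u (k *: a) = k * lin u a.
Proof. by rewrite /lin mulr_sumr; apply: eq_bigr => j _; rewrite mxE mulrCA. Qed.

Lemma linN a : lin u (- a) = - lin u a.
Proof. by rewrite -scaleN1r linZ mulN1r. Qed.

Lemma linB a b : lin u (a - b) = lin u a - lin u b.
Proof. by rewrite linD linN. Qed.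

Lemma evalZ_linpoly a : evalZ (linpoly u) a = (lin u a)%:~R.
Proof.
rewrite /evalZ /linpoly raddf_sum /lin rmorph_sum; apply: eq_bigr => j _.
by rewrite /= mevalZ mevalXU rmorphM.
Qed.

End Linear.

Lemma ex_int_min (P : int -> Prop) (N : int) :
  (exists k, P k) -> (forall k, P k -> N <= k) ->
  exists m, P m /\ forall k, P k -> m <= k.
Proof.
move=> [k0 Pk0] lbP.
have shiftK k : P k -> N + `|k - N|%N = k.
  by move=> Pk; have := lbP _ Pk; lia.
have [|n [[Pn minn] _]] :=
  dec_inh_nat_subset_has_unique_least_element (fun n => P (N + n%:Z)) (fun n => classic _).
  by exists `|k0 - N|%N; rewrite shiftK.
exists (N + n%:Z); split=> // k Pk.
have := minn `|k - N|%N; rewrite shiftK // => /(_ Pk).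
by have := lbP _ Pk; lia.
Qed.

Lemma ex_int_max (P : int -> Prop) (N : int) :
  (exists k, P k) -> (forall k, P k -> k <= N) ->
  exists m, P m /\ forall k, P k -> k <= m.
Proof.
move=> [k0 Pk0] ubP.
have [|k Pk|m [Pm maxm]] := ex_int_min (P := fun k => P (- k)) (N := - N).
- by exists (- k0); rewrite opprK.
- by rewrite lerNl ubP.
exists (- m); split=> // k Pk.
by rewrite lerNr maxm ?opprK.
Qed.

Section Primitive.
Variables (dim : nat) (e : zvec dim).

Lemma primitive_scale_int (r : rat) (c : zvec dim) : primitive e ->
  (forall j, (c ord0 j)%:~R = r * (e ord0 j)%:~R) -> r = (numq r)%:~R.
Proof.
move=> [_ primE] cE.
set N := numq r; set D := denq r.
have rND : r = N%:~R / D%:~R by rewrite divq_num_den.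
have D0 : (D%:~R : rat) != 0 by rewrite intr_eq0 gt_eqF ?denq_gt0.
have D_dvd j : (D %| e ord0 j)%Z.
  have cD : c ord0 j * D = N * e ord0 j.
    by apply: (@intr_inj rat); rewrite !intrM cE rND; field.
  have : (D %| N * e ord0 j)%Z by rewrite -cD dvdz_mull.
  by rewrite Gauss_dvdzr // coprimezE coprime_sym coprime_num_den.
have eD : e = D *: \row_j (e ord0 j %/ D)%Z.
  by apply/rowP => j; rewrite !mxE mulrC divzK.
have D1 : D = 1 by have := primE _ _ eD; have := denq_gt0 r; rewrite -/D; lia.
by rewrite rND D1 divr1.
Qed.

End Primitive.

(* The factor (h_i, h_i(-d) - 1)! of H_d vanishes at c since 0 <= h_i(c) < h_i(-d). *)
Lemma Hpoly_dvd_Vmon dim n (h : 'I_n -> zvec dim) (f : {mpoly CC[dim]}) dv c i :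
  (exists g, f = Hpoly h dv * g) ->
  inS h c -> lin (h i) (c + dv) < 0 -> Vmon f c.
Proof.
move=> [g ->] Sc; rewrite linD => hcd.
rewrite /Vmon /evalZ mevalM /Hpoly rmorph_prod (bigD1 i) //= -mulrA.
apply/eqP; rewrite mulf_eq0; apply/orP; left; apply/eqP.
case Ei: (lin (h i) (- dv) - 1) => [k|m]; last by move: Ei (Sc i); rewrite linN; lia.
case Ec: (lin (h i) c) (Sc i) => [l|//] _.
have lk : (l < k.+1)%N by rewrite -ltz_nat; move: Ei Ec; rewrite linN; lia.
rewrite /ffact rmorph_prod (bigD1 (Ordinal lk)) //=.
apply/eqP; rewrite mulf_eq0; apply/orP; left; apply/eqP.
by rewrite mevalB mevalC [X in X - _]evalZ_linpoly Ec subrr.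
Qed.

Section MonomialIdeal.
Variables (dim n : nat) (h : 'I_n -> zvec dim) (E : zvec dim -> Prop).
Hypothesis idealE : Sideal h E.

Lemma monomial_eq0 (a b : zvec dim) : b != a -> monomial a b = 0.
Proof. by rewrite /monomial => /negbTE ->. Qed.

Lemma monomial_id (a : zvec dim) : monomial a a = 1.
Proof. by rewrite /monomial eqxx. Qed.

Lemma mideal_monomial a : E a -> mideal h E (monomial a).
Proof.
have [SE _] := idealE; move=> Ea.
have supp b : monomial a b != 0 -> b = a.
  by apply: contraNeq => /monomial_eq0 ->.
split; [split|] => [|b /supp -> | b /supp ->] //; last exact: SE.
by exists [:: a] => b /supp ->; rewrite inE.
Qed.

Lemma fixes_mideal (f : {mpoly CC[dim]}) dv : inS h (- dv) ->
  fixes f dv (mideal h E) <->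
  (forall a, E a -> evalZ f a != 0 -> E (a + dv)) /\
  (forall b, E b -> evalZ f (b - dv) != 0).
Proof.
move=> Smd; have [SE EI] := idealE; split.
- move=> [fwd bwd]; split.
  + move=> a Ea fa; have [_] := fwd _ (mideal_monomial Ea); apply.
    by rewrite /delta addrK monomial_id mulr1.
  + move=> b Eb; have [r [_ /(_ b)]] := bwd _ (mideal_monomial Eb).
    rewrite monomial_id /delta; apply: contra_eq_neq => ->.
    by rewrite mul0r eq_sym oner_neq0.
- move=> [shiftE fE]; split.
  + move=> r [[[s rs] _] rE].
    have supp b : delta f dv r b != 0 -> E b.
      rewrite /delta mulf_eq0 negb_or => /andP[fb rb].
      by rewrite -(subrK dv b); apply: shiftE => //; apply: rE.
    split; [split|] => [|b /supp /SE //|//].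
    exists (map (+%R^~ dv) s) => b; rewrite /delta mulf_eq0 negb_or => /andP[_ /rs].
    by move/(map_f (+%R^~ dv)); rewrite subrK.
  + move=> r [[[s rs] _] rE].
    set r' := fun c => r (c + dv) / evalZ f c.
    have supp c : r' c != 0 -> E c.
      rewrite mulf_eq0 negb_or => /andP[/rE rc _].
      by rewrite -(addrK dv c); apply: EI.
    exists r'; split; [split; [split|]|] => [|c /supp /SE //|//|b].
    * exists (map (+%R^~ (- dv)) s) => c; rewrite mulf_eq0 negb_or => /andP[/rs + _].
      by move/(map_f (+%R^~ (- dv))); rewrite addrK.
    * rewrite /delta /r' subrK; have [->|rb] := eqVneq (r b) 0; first by rewrite mul0r mulr0.
      by rewrite mulrCA mulfV ?mulr1 //; apply/fE/rE.
Qed.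
End MonomialIdeal.

Section Line.
Variables (dim n : nat) (h : 'I_n -> zvec dim) (f : {mpoly CC[dim]}).
Variables (dv ev : zvec dim) (q : nat).
Hypothesis pointed : forall a, (forall i, lin (h i) a = 0) -> a = 0.
Hypothesis Hdvd : exists g, f = Hpoly h dv * g.
Hypothesis Smd : inS h (- dv).
Hypothesis q_gt0 : (0 < q)%N.
Hypothesis ev_prim : primitive ev.
Hypothesis dvE : dv = q%:Z *: ev.

Lemma lin_dv i : lin (h i) dv = q%:Z * lin (h i) ev.
Proof. by rewrite dvE linZ. Qed.

Lemma lin_ev_le0 i : lin (h i) ev <= 0.
Proof. by have := Smd i; rewrite linN lin_dv; lia. Qed.

Lemma lin_ev_eq0 i : lin (h i) dv = 0 -> lin (h i) ev = 0.
Proof. by rewrite lin_dv; lia. Qed.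

Lemma exists_lin_ev_lt0 : exists i, lin (h i) ev < 0.
Proof.
apply: NNPP => noneg; have [/negP ev0 _] := ev_prim; apply/ev0/eqP/pointed => i.
by apply/eqP; rewrite eq_le lin_ev_le0 /= leNgt; apply/negP => ?; apply: noneg; exists i.
Qed.

Lemma inSD a b : inS h a -> inS h b -> inS h (a + b).
Proof. by move=> Sa Sb i; rewrite linD addr_ge0. Qed.

Lemma inSZ (k : int) s : 0 <= k -> inS h s -> inS h (k *: s).
Proof. by move=> k0 Ss i; rewrite linZ mulr_ge0. Qed.

Lemma inS_Nev : inS h (- ev).
Proof. by move=> i; rewrite linN oppr_ge0 lin_ev_le0. Qed.

Lemma inS_line_le a k j : inS h (a + k *: ev) -> j <= k -> inS h (a + j *: ev).
Proof.
move=> Sk jk; have -> : a + j *: ev = (a + k *: ev) + (k - j) *: (- ev) by vec_ring.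
by apply: inSD => //; apply: inSZ; [lia | exact: inS_Nev].
Qed.

Definition line_root a (k : int) := Vmon f (a + k *: ev).

Lemma line_rootD a j k : line_root (a + j *: ev) k = line_root a (j + k).
Proof. by rewrite /line_root; congr Vmon; vec_ring. Qed.

Lemma exit_exists a k0 k1 : k0 <= k1 ->
  inS h (a + k0 *: ev) -> ~ inS h (a + k1 *: ev) ->
  exists2 k, k0 <= k < k1 & inS h (a + k *: ev) /\ ~ inS h (a + (k + 1) *: ev).
Proof.
move=> k01 S0 S1.
have [|k [k0k kk1 Sk]|K [[k0K K1 SK] maxK]] :=
  ex_int_max (P := fun k => [/\ k0 <= k, k <= k1 & inS h (a + k *: ev)]) (N := k1).
- by exists k0; split.
- exact: kk1.
have K1' : K < k1 by rewrite lt_neqAle K1 andbT; apply: contraPneq S1 => <-.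
exists K; first by rewrite k0K.
split=> // SK1; suff : K + 1 <= K by lia.
by apply: maxK; split=> //; lia.
Qed.

(* Leaving S in direction e means crossing a facet with h_i(e) < 0, where the
   factor of H_d for h_i forces a root q steps back. *)
Lemma line_root_exit a k : inS h (a + k *: ev) -> ~ inS h (a + (k + 1) *: ev) ->
  line_root a (k + 1 - q%:Z).
Proof.
move=> Sk /not_all_ex_not [i /negP]; rewrite -ltNge => exit_i.
apply: (Hpoly_dvd_Vmon (i := i) Hdvd); first by apply: (inS_line_le Sk); lia.
by have -> : a + (k + 1 - q%:Z) *: ev + dv = a + (k + 1) *: ev by rewrite dvE; vec_ring.
Qed.

Lemma line_root_exists a : inS h a -> exists k, line_root a k.
Proof.
move=> Sa; have [i ev_i] := exists_lin_ev_lt0.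
have Sa0 : inS h (a + 0 *: ev) by rewrite scale0r addr0.
have notS : ~ inS h (a + (lin (h i) a + 1) *: ev).
  by move=> /(_ i); rewrite linD linZ; have := Sa i; nia.
have [|k _ [Sk Sk1]] := exit_exists _ Sa0 notS; first by have := Sa i; lia.
by exists (k + 1 - q%:Z); apply: line_root_exit.
Qed.

Definition least_root a m := line_root a m /\ forall k, line_root a k -> m <= k.

(* The integer counterpart of pval, measured in steps of e along a + Z e. *)
Definition ipval a P := exists m, [/\ least_root a m, line_root a P, m <= P,
  P < m + q%:Z & forall k, line_root a k -> k < m + q%:Z -> k <= P].

Lemma ipval_exists a M : inS h a -> (forall k, line_root a k -> M <= k) ->
  exists P, ipval a P.
Proof.
move=> Sa lbM.
have [m [rm minm]] := ex_int_min (line_root_exists Sa) lbM.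
have [|k [_ /ltW //]|P [[rP Pmq] maxP]] :=
  ex_int_max (P := fun k => line_root a k /\ k < m + q%:Z) (N := m + q%:Z).
  by exists m; split=> //; lia.
by exists P, m; split=> //; [apply: minm | move=> k rk kmq; apply: maxP].
Qed.

Lemma ipval_uniq a P P' : ipval a P -> ipval a P' -> P = P'.
Proof.
move=> [m [[rm minm] rP mP Pm maxP]] [m' [[rm' minm'] rP' mP' Pm' maxP']].
have mm' : m = m' by have := minm _ rm'; have := minm' _ rm; lia.
by subst m'; have := maxP _ rP' Pm'; have := maxP' _ rP Pm; lia.
Qed.

Lemma ipval_shift a P j : ipval a P -> ipval (a + j *: ev) (P - j).
Proof.
move=> [m [[rm minm] rP mP Pm maxP]]; exists (m - j).
have shiftK k : line_root (a + j *: ev) (k - j) = line_root a k.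
  by rewrite line_rootD addrC subrK.
split; rewrite ?shiftK //; try lia.
- by split=> [|k]; rewrite ?shiftK // -[k](addrK j) shiftK => /minm; lia.
- by move=> k; rewrite -[k](addrK j) shiftK => /maxP; lia.
Qed.

Definition qfrac (k : int) : rat := k%:~R / q%:R.

Lemma qfrac_le k k' : (qfrac k <= qfrac k') = (k <= k').
Proof. by rewrite ler_pM2r ?ler_int // invr_gt0 ltr0n. Qed.

Lemma qfrac_lt k k' : (qfrac k < qfrac k') = (k < k').
Proof. by rewrite ltr_pM2r ?ltr_int // invr_gt0 ltr0n. Qed.

Lemma qfrac_ge0 k : (0 <= qfrac k) = (0 <= k).
Proof. by rewrite -qfrac_le /qfrac mul0r. Qed.

Lemma qfracDq k : qfrac k + 1 = qfrac (k + q%:Z).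
Proof. by rewrite /qfrac intrD mulrDl divff // pnatr_eq0 -lt0n. Qed.

Lemma line_point (a b : zvec dim) (k : int) (t : rat) : t = qfrac k ->
  (forall j, (b ord0 j)%:~R = (a ord0 j)%:~R + t * (dv ord0 j)%:~R) -> b = a + k *: ev.
Proof.
move=> -> bE; apply/rowP => j; apply: (@intr_inj rat).
rewrite bE dvE !mxE intrD !intrM /qfrac; field.
by rewrite pnatr_eq0 -lt0n.
Qed.

(* Since e is primitive, a + t d is a lattice point only for t = k / q. *)
Lemma onVP a t : onV f dv a t <-> exists2 k, line_root a k & t = qfrac k.
Proof.
have q0 : (q%:R : rat) != 0 by rewrite pnatr_eq0 -lt0n.
split=> [[b [bE Vb]] | [k rk ->]].
  have tq : t = qfrac (numq (t * q%:R)).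
    rewrite /qfrac -(primitive_scale_int (c := b - a) ev_prim) ?mulfK // => j.
    by rewrite !mxE intrB bE dvE mxE intrM; ring.
  by exists (numq (t * q%:R)) => //; rewrite /line_root -(line_point tq bE).
exists (a + k *: ev); split=> // j.
by rewrite dvE !mxE intrD !intrM /qfrac; field.
Qed.

Lemma floor_qfrac (v : rat) k : v <= qfrac k -> Num.floor (v * q%:R) <= k.
Proof.
move=> vk; rewrite -(ler_int rat); apply: le_trans (floor_le _) _.
by rewrite -ler_pdivlMr ?ltr0n.
Qed.

Lemma val_gt_ninfP a :
  val_gt_ninf f dv a <-> exists M, forall k, line_root a k -> M <= k.
Proof.
split=> [[v lbv] | [M lbM]].
  by exists (Num.floor (v * q%:R)) => k rk; apply/floor_qfrac/lbv/onVP; exists k.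
by exists (qfrac M) => t /onVP [k /lbM Mk ->]; rewrite qfrac_le.
Qed.

Lemma is_pvalP a p : is_pval f dv a p <-> exists2 P, ipval a P & p = qfrac P.
Proof.
have onV_root k : line_root a k -> onV f dv a (qfrac k) by move=> rk; apply/onVP; exists k.
split=> [[v [[lbv glbv] /onVP [P rP pP] vp pv1 maxp]] | [P [m [[rm minm] rP mP Pm maxP]] ->]].
  have [|m [rm minm]] := ex_int_min (ex_intro _ P rP) (N := Num.floor (v * q%:R)).
    by move=> k /onV_root /lbv /floor_qfrac.
  have vm : v = qfrac m.
    apply/eqP; rewrite eq_le (lbv _ (onV_root _ rm)) /=.
    by apply: glbv => t /onVP [k /minm mk ->]; rewrite qfrac_le.
  exists P => //; exists m; split=> //.
  + by rewrite -qfrac_le -vm -pP.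
  + by rewrite -qfrac_lt -qfracDq -vm -pP.
  + move=> k rk kmq; rewrite -qfrac_le -pP; apply: maxp; first exact: onV_root.
      by rewrite vm qfrac_le minm.
    by rewrite vm qfracDq qfrac_lt.
exists (qfrac m); split.
- split=> [t /onVP [k /minm mk ->] | w]; first by rewrite qfrac_le.
  by apply; apply: onV_root.
- exact: onV_root.
- by rewrite qfrac_le.
- by rewrite qfracDq qfrac_lt.
- by move=> t /onVP [k rk ->]; rewrite qfracDq !qfrac_le qfrac_lt => _; apply: maxP.
Qed.

Lemma Vmon'P b : Vmon' f dv b <-> ipval b 0.
Proof.
split=> [[a [p [/is_pvalP [P aP pP] bE]]] | b0].
  by rewrite (line_point pP bE); have := ipval_shift P aP; rewrite subrr.
exists b, 0; split=> [|j]; last by rewrite mul0r addr0.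
by apply/is_pvalP; exists 0; rewrite // /qfrac mul0r.
Qed.

Definition root_window c K := (forall k, line_root c k -> K - q%:Z < k) /\
  (forall k, K - q%:Z < k <= K -> line_root c k).

Lemma root_window_ipval c K : root_window c K -> ipval c K.
Proof.
move=> [lbK winK]; have rm : line_root c (K - q%:Z + 1) by apply: winK; lia.
exists (K - q%:Z + 1); split; first by split=> // k /lbK; lia.
- by apply: winK; lia.
- lia.
- lia.
- by move=> k _; lia.
Qed.

Lemma W_addS be a s : W h be a -> inS h s -> W h be (a + s).
Proof.
move=> [Sa bea] Ss; split=> [|i]; first exact: inSD.
by rewrite linD; apply: le_trans (bea i) _; rewrite lerDl.
Qed.

Lemma W_line be a k : compatible h dv be -> W h be a -> inS h (a + k *: ev) ->
  W h be (a + k *: ev).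
Proof.
move=> cbe [_ bea] Sk; split=> // i.
by case: (cbe i) => [-> // | /lin_ev_eq0 ev_i]; rewrite linD linZ ev_i mulr0 addr0.
Qed.

(* Between a and vpt(a) the line cannot leave S: the exit root would lie below
   the least root. *)
Lemma inS_vpt a P : inS h a -> ipval a P -> 0 <= P -> inS h (a + P *: ev).
Proof.
move=> Sa [m [[_ minm] _ _ Pm _]] P0; apply: NNPP => SP.
have Sa0 : inS h (a + 0 *: ev) by rewrite scale0r addr0.
have [k /andP[_ kP] [Sk Sk1]] := exit_exists P0 Sa0 SP.
by have := minm _ (line_root_exit Sk Sk1); lia.
Qed.

Lemma W_vpt be a P : compatible h dv be -> W h be a -> ipval a P ->
  W h be (a + P *: ev).
Proof.
move=> cbe Wa aP; have [P0 | P0] := lerP 0 P.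
  by apply: W_line => //; apply: inS_vpt => //; case: Wa.
have -> : a + P *: ev = a + (- P) *: (- ev) by rewrite scaleNr scalerN opprK.
by apply: W_addS => //; apply: inSZ; [lia | exact: inS_Nev].
Qed.

Lemma Vmon'_vpt a P : ipval a P -> Vmon' f dv (a + P *: ev).
Proof. by move=> aP; apply/Vmon'P; have := ipval_shift P aP; rewrite subrr. Qed.

Section GoodFamily.
Variable B : ('I_n -> nat) -> Prop.
Hypothesis goodB : good_family h f dv ev q B.

Definition gensI a := Vmon' f dv a /\ WB h B a.
Definition expI a := WB h B a /\ exists2 P, ipval a P & 0 <= P.

Lemma WB_ipval a : WB h B a -> exists P, ipval a P.
Proof.
have [_ _ valB _ _] := goodB; move=> WBa.
have [M lbM] := (val_gt_ninfP a).1 (valB _ WBa).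
by have [be [_ [Sa _]]] := WBa; apply: ipval_exists Sa lbM.
Qed.

Lemma WB_vpt a P : WB h B a -> ipval a P -> WB h B (a + P *: ev).
Proof.
have [_ compB _ _ _] := goodB.
by move=> [be [Bbe Wa]] aP; exists be; split=> //; apply: W_vpt (compB _ Bbe) Wa aP.
Qed.

(* Condition (2) at vpt(b) fills the window below it with roots. *)
Lemma WB_root_window b P : WB h B b -> ipval b P -> root_window b P.
Proof.
move=> WBb bP; have [_ _ _ windowB _] := goodB.
have Vc := Vmon'_vpt bP; have [m [[_ minm] _ _ mq _]] := (Vmon'P _).1 Vc.
split=> [k rk | k /andP[lo hi]].
  have : line_root (b + P *: ev) (k - P) by rewrite line_rootD addrC subrK.
  by move/minm; lia.
have Pk : (`|P - k| < q)%N by rewrite -ltz_nat gez0_abs; lia.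
have := windowB _ Vc (WB_vpt WBb bP) _ Pk; rewrite gez0_abs; last by lia.
by have -> : b + P *: ev - (P - k) *: ev = b + k *: ev by vec_ring.
Qed.

(* If a lies above a generator g but pval(a) < 0, then vpt(a) - g is in S - e,
   against condition (3). *)
Lemma genE_expI a : genE h gensI a <-> expI a.
Proof.
split=> [[g [[Vg [be [Bbe Wg]]] Sag]] | [WBa [P aP P0]]].
  have WBa : WB h B a by exists be; split=> //; rewrite -(subrK g a) addrC; apply: W_addS.
  split=> //; have [P aP] := WB_ipval WBa; exists P => //.
  rewrite leNgt; apply/negP => P0; have [_ _ _ _ sepB] := goodB.
  apply: (sepB _ g (Vmon'_vpt aP) (WB_vpt WBa aP) Vg); first by exists be.
  exists ((a - g) + (- (P + 1)) *: (- ev)); split; last by vec_ring.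
  by apply: inSD => //; apply: inSZ; [lia | exact: inS_Nev].
exists (a + P *: ev); split; first by split; [exact: Vmon'_vpt | exact: WB_vpt].
have -> : a - (a + P *: ev) = P *: (- ev) by vec_ring.
by apply: inSZ => //; exact: inS_Nev.
Qed.

Lemma expI_shift a : expI a -> evalZ f a != 0 -> expI (a + dv).
Proof.
move=> [WBa [P aP P0]] fa; have [_ winP] := WB_root_window WBa aP.
have qP : q%:Z <= P.
  rewrite leNgt; apply/negP => Pq; move/eqP: fa; apply.
  by have := winP 0; rewrite /line_root scale0r addr0; apply; lia.
have [_ compB _ _ _] := goodB; have [be [Bbe Wa]] := WBa; have [Sa _] := Wa.
rewrite dvE; split; last by exists (P - q%:Z); [exact: ipval_shift | lia].
exists be; split=> //; apply: W_line (compB _ Bbe) Wa _.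
by apply: (inS_line_le (k := P)) => //; exact: inS_vpt.
Qed.

Lemma expI_nonroot b : expI b -> evalZ f (b - dv) != 0.
Proof.
move=> [WBb [P bP P0]]; have [lbP _] := WB_root_window WBb bP.
apply/eqP => fb; have : line_root b (- q%:Z) by rewrite /line_root scaleNr -dvE.
by move/lbP; lia.
Qed.

Lemma Sideal_genE : Sideal h (genE h gensI).
Proof.
split=> [a [g [[_ [be [_ [Sg _]]]] Sag]] | a s [g [Gg Sag]] Ss].
  by rewrite -(subrK g a); apply: inSD.
by exists g; split=> //; rewrite addrAC; apply: inSD.
Qed.

Lemma fixes_genE : fixes f dv (mideal h (genE h gensI)).
Proof.
apply/(fixes_mideal Sideal_genE _ Smd); split.
- by move=> a /genE_expI aI fa; apply/genE_expI/expI_shift.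
- by move=> b /genE_expI; apply: expI_nonroot.
Qed.

Lemma Exp_genE a : Exp h (mideal h (genE h gensI)) a <->
  WB h B a /\ exists p, is_pval f dv a p /\ 0 <= p.
Proof.
split=> [[_ [_ /(_ a)]] | [WBa [p [/is_pvalP [P aP ->]]]]].
  rewrite monomial_id oner_neq0 => /(_ isT) /genE_expI [WBa [P aP P0]].
  by split=> //; exists (qfrac P); split; [apply/is_pvalP; exists P | rewrite qfrac_ge0].
rewrite qfrac_ge0 => P0; have aI : genE h gensI a by apply/genE_expI; split=> //; exists P.
split; [by have [be [_ []]] := WBa | apply: mideal_monomial aI; exact: Sideal_genE].
Qed.

Hypothesis interior : exists a, forall i, 0 < lin (h i) a.

(* A large multiple of an interior point of S lies in W_beta. *)
Lemma genE_nonempty : exists g, genE h gensI g.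
Proof.
have [[be Bbe] _ _ _ _] := goodB; have [a0 a0_int] := interior.
set N := (\sum_(i < n) be i)%N.
have WBa : WB h B (N%:Z *: a0).
  exists be; split=> //; split=> i; rewrite linZ; first by rewrite mulr_ge0 // ltW.
  have : (be i <= N)%N by rewrite /N (bigD1 i) //= leq_addr.
  by have := a0_int i; rewrite -lez_nat; nia.
have [P aP] := WB_ipval WBa.
exists (N%:Z *: a0 + P *: ev), (N%:Z *: a0 + P *: ev).
by split=> [|i]; [split; [exact: Vmon'_vpt | exact: WB_vpt] | rewrite linB subrr].
Qed.

End GoodFamily.

Section FixedIdeal.
Variable E : zvec dim -> Prop.
Hypothesis idealE : Sideal h E.
Hypothesis shiftE : forall a, E a -> evalZ f a != 0 -> E (a + dv).
Hypothesis nonrootE : forall b, E b -> evalZ f (b - dv) != 0.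

Lemma E_line c k0 : E (c + k0 *: ev) -> exists K,
  [/\ root_window c K, E (c + K *: ev) & forall k, E (c + k *: ev) -> k <= K].
Proof.
move=> Ek0; have [SE EI] := idealE; have [i ev_i] := exists_lin_ev_lt0.
have [|k /SE /(_ i)|K [EK maxK]] :=
  ex_int_max (P := fun k => E (c + k *: ev)) (N := `|lin (h i) c|).
- by exists k0.
- by rewrite linD linZ => ?; have := ler_norm (lin (h i) c); nia.
have E_le k : k <= K -> E (c + k *: ev).
  move=> kK; have -> : c + k *: ev = (c + K *: ev) + (K - k) *: (- ev) by vec_ring.
  by apply: EI => //; apply: inSZ; [lia | exact: inS_Nev].
exists K; split=> //; split=> [k rk | k /andP[lo hi]].
  rewrite ltNge; apply/negP => kKq.
  have /nonrootE : E (c + (k + q%:Z) *: ev) by apply: E_le; lia.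
  have -> : c + (k + q%:Z) *: ev - dv = c + k *: ev by rewrite dvE; vec_ring.
  by rewrite rk eqxx.
apply: NNPP => /eqP nr; have := shiftE (E_le k hi) nr.
have -> : c + k *: ev + dv = c + (k + q%:Z) *: ev by rewrite dvE; vec_ring.
by move=> /maxK; lia.
Qed.

Definition Bfix be := compatible h dv be /\ forall c, W h be c -> exists k, E (c + k *: ev).

(* Translating far enough along -e brings any point of W_beta into a + S. *)
Lemma Bfix_nonempty a : E a -> exists be, Bfix be.
Proof.
move=> Ea; have [SE EI] := idealE.
exists (fun i => if lin (h i) dv == 0 then `|lin (h i) a|%N else 0%N); split.
  by move=> i; case: eqP => [dv_i | _]; [right | left].
move=> c [Sc Wc]; set J := (\sum_(i < n) `|lin (h i) a|%N)%N.
exists (- J%:Z); rewrite -[_ + _](addrNK a) addrC; apply: EI => // i.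
have aJ : lin (h i) a <= J.
  have : (`|lin (h i) a| <= J)%N by rewrite /J (bigD1 i) //= leq_addr.
  by rewrite -lez_nat gez0_abs // SE.
rewrite linB linD linZ; move: (Wc i) (Sc i) (lin_ev_le0 i).
case: eqP => [/lin_ev_eq0 -> | dv_i]; first lia.
have : lin (h i) ev != 0 by apply: contra_not_neq dv_i; rewrite lin_dv => ->; rewrite mulr0.
by move=> *; nia.
Qed.

Lemma good_family_Bfix a : E a -> good_family h f dv ev q Bfix.
Proof.
have line c : WB h Bfix c -> exists K,
    [/\ root_window c K, E (c + K *: ev) & forall k, E (c + k *: ev) -> k <= K].
  by move=> [be [[_ lineE] /lineE [k /E_line]]].
have vpt_line c : Vmon' f dv c -> WB h Bfix c ->
    [/\ root_window c 0, E c & forall k, E (c + k *: ev) -> k <= 0].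
  move=> /Vmon'P c0 /line [K [winK EK maxK]].
  have K0 := ipval_uniq (root_window_ipval winK) c0; subst K.
  by move: EK; rewrite scale0r addr0.
move=> Ea; have [be Bbe] := Bfix_nonempty Ea; split.
- by exists be.
- by move=> ? [].
- move=> c /line [K [[lbK _] _ _]].
  by apply/val_gt_ninfP; exists (K - q%:Z) => k /lbK /ltW.
- move=> c Vc /(vpt_line _ Vc) [[_ winK] _ _] i iq.
  by rewrite -scaleNr; apply: winK; lia.
- move=> c c' Vc /(vpt_line _ Vc) [_ _ maxK] Vc' /(vpt_line _ Vc') [_ Ec' _] [s [Ss cs]].
  have : E (c' + s) by apply: idealE.2.
  have -> : c' + s = c + 1 *: ev by rewrite -[c](subrK c') cs; vec_ring.
  by move/maxK.
Qed.

End FixedIdeal.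

End Line.

Theorem mainTheorem9 (dim n : nat) (h : 'I_n -> 'rV[int]_dim)
  (f : {mpoly CC[dim]}) (dv ev : 'rV[int]_dim) (q : nat) :
  facet_data h ->
  (* delta = x^d f(theta) is a homogeneous operator of degree d: H_d | f *)
  (exists g : {mpoly CC[dim]}, f = Hpoly h dv * g) ->
  dv != 0 -> inS h (- dv) -> (0 < q)%N -> primitive ev -> dv = (q%:Z) *: ev ->
  ((exists E : 'rV[int]_dim -> Prop,
      [/\ Sideal h E,
          (exists r, mideal h E r /\ exists a, r a != 0) &
          fixes f dv (mideal h E)])
   <-> (exists B : ('I_n -> nat) -> Prop, good_family h f dv ev q B))
  /\
  (forall B : ('I_n -> nat) -> Prop, good_family h f dv ev q B ->
     let I := mideal h (genE h (fun a => Vmon' f dv a /\ WB h B a)) in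
     fixes f dv I /\
     (forall a, Exp h I a <-> (WB h B a /\ exists p, is_pval f dv a p /\ 0 <= p))).
Proof.
move=> [_ _ interior pointed _] Hdvd _ Smd q_gt0 ev_prim dvE.
split; first split.
- move=> [E [idealE [r [[_ rE] [a ra]]] /(fixes_mideal idealE f Smd) [shiftE nonrootE]]].
  eexists; apply: (good_family_Bfix pointed Smd q_gt0 ev_prim dvE idealE shiftE nonrootE).
  exact: rE ra.
- move=> [B goodB]; have fixI := fixes_genE pointed Hdvd Smd q_gt0 ev_prim dvE goodB.
  exists (genE h (gensI h f dv B)); split=> //; first exact: Sideal_genE.
  have [g gI] := genE_nonempty pointed Hdvd Smd q_gt0 ev_prim dvE goodB interior.
  exists (monomial g); split; first by apply: mideal_monomial gI; exact: Sideal_genE.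
  by exists g; rewrite monomial_id oner_neq0.
- move=> B goodB I; split; first exact: (fixes_genE pointed Hdvd Smd q_gt0 ev_prim dvE goodB).
  exact: (Exp_genE pointed Hdvd Smd q_gt0 ev_prim dvE goodB).
Qed.
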